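(* Let $S\subseteq G$ and $T:=G\setminus S$ be such that $t\sqsubset s$ for all $t\in T$ and $s\in S$. Then for all $f\in\mathcal{L}(\mathcal{X}_G)$, $$\underline{E}^{\mathrm{irr}}_G(f(X_G))=\underline{E}^{\mathrm{irr}}_T\big(g(X_T)\big),$$ where $g$ is the function on $\mathcal{X}_T$ defined by $g(x_T):=\underline{E}^{\mathrm{irr}}_{S\mid x_{P(S)}}\big(f(X_S,x_T)\big)$, with $x_{P(S)}$ the restriction of $x_T$ to $P(S)$ (note $P(S)\subseteq T$ and $P(T)=\emptyset$ under the hypothesis).
   Context: Setting: $G$ is a finite set of nodes forming a DAG; node $s$ carries a variable $X_s$ with finite nonempty state space $\mathcal{X}_s$; $\mathcal{X}_S=\times_{s\in S}\mathcal{X}_s$; $\mathcal{L}(\mathcal{X}_S)$ denotes real-valued functions on $\mathcal{X}_S$. $P(s)$: parents of $s$; $s\sqsubset v$: there is a directed path of positive length from $s$ to $v$; $D(s)=\{v:s\sqsubset v\}$; $N(s)=G\setminus(\{s\}\cup D(s))$. For $K\subseteq G$: $P(K)=(\bigcup_{s\in K}P(s))\setminus K$. Local models: nonempty closed convex sets $\mathcal{M}_{s\mid x_{P(s)}}$ of probability mass functions on $\mathcal{X}_s$. Full conditional probability measure on finite $\Omega$: $(A,B)\mapsto P(A\mid B)$ ($B\ne\emptyset$) with (F1) $P(\cdot\mid B)$ a probability measure, $P(B\mid B)=1$; (F2) $P(A\cap C\mid B)=P(A\mid C\cap B)P(C\mid B)$ if $C\cap B\neq\emptyset$. Irrelevant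 natural extension $\mathcal{F}^{\mathrm{irr}}_G$: all full conditional probability measures $P$ on $\mathcal{X}_G$ with $P(X_s\mid x_{N(s)})\in\mathcal{M}_{s\mid x_{P(s)}}$ for all $s,x_{N(s)}$. Unconditional lower expectation: $\underline{E}^{\mathrm{irr}}_G(f(X_G))=\inf\{\sum_{z_G}f(z_G)P(z_G):P\in\mathcal{F}^{\mathrm{irr}}_G\}$. Sub-network: for $K\subseteq G$ and fixed $x_{P(K)}$, the credal network on the DAG restricted to $K$ with local credal sets $\mathcal{M}_{s\mid(z_{P(s)\cap K},x_{P(s)\setminus K})}$; its irrelevant natural extension's lower expectation is $\underline{E}^{\mathrm{irr}}_{K\mid x_{P(K)}}$, written $\underline{E}^{\mathrm{irr}}_K$ when $P(K)=\emptyset$. *)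

From HB Require Import structures.
From Stdlib Require Import Reals.
From mathcomp Require Import all_boot.
Set Implicit Arguments. Unset Strict Implicit. Unset Printing Implicit Defensive.

Local Open Scope R_scope.

Lemma Rplus_assoc' : associative Rplus.
Proof. by move=> a b c; rewrite Rplus_assoc. Qed.
HB.instance Definition _ := Monoid.isComLaw.Build R 0 Rplus Rplus_assoc' Rplus_comm Rplus_0_l.

Definition conf (V : finType) (X : V -> finType) := {dffun forall v : V, X v}.

Definition edgeK (V : finType) (par : V -> {set V}) (K : {set V}) : rel V :=
  fun s v => [&& s \in K, v \in K & s \in par v].

Definition belowK (V : finType) (par : V -> {set V}) (K : {set V}) (s v : V) : bool :=
  [exists u, edgeK par K s u && connect (edgeK par K) u v].

Definition acyclic (V : finType) (par : V -> {set V}) : Prop :=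
  forall s, ~~ belowK par setT s s.

Definition DescK (V : finType) (par : V -> {set V}) (K : {set V}) (s : V) : {set V} :=
  [set v in K | belowK par K s v].
Definition NondescK (V : finType) (par : V -> {set V}) (K : {set V}) (s : V) : {set V} :=
  K :\: (s |: DescK par K s).

Definition is_pmf (T : finType) (p : T -> R) : Prop :=
  (forall a, 0 <= p a) /\ \big[Rplus/0]_(a : T) p a = 1.

Definition credal_set (T : finType) (C : (T -> R) -> Prop) : Prop :=
  (exists p, C p) /\
  (forall p, C p -> is_pmf p) /\
  (forall p q (l : R), C p -> C q -> 0 <= l <= 1 ->
       C (fun a => l * p a + (1 - l) * q a)) /\
  (forall (u : nat -> T -> R) (q : T -> R),
       (forall n, C (u n)) -> (forall a, Un_cv (fun n => u n a) (q a)) -> C q).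

(* M s x = M_{s | x_{P(s)}}: a nonempty closed convex set of pmfs on X_s,
   depending on the joint state x only through x_{P(s)}. *)
Definition local_models (V : finType) (X : V -> finType) (par : V -> {set V})
  (M : forall s : V, conf X -> (X s -> R) -> Prop) : Prop :=
  forall s,
    (forall x, credal_set (M s x)) /\
    (forall x y : conf X, (forall t, t \in par s -> x t = y t) ->
        forall p, M s x p <-> M s y p).

(* A full conditional probability measure on the finite set Om (only its values
   on subsets of Om matter). *)
Definition fcp (C : finType) (Om : {set C}) (P : {set C} -> {set C} -> R) : Prop :=
  forall A B D : {set C}, A \subset Om -> B \subset Om -> D \subset Om -> B != set0 ->
    [/\ 0 <= P A B,
        P Om B = 1,
        P B B = 1,
        [disjoint A & D] -> P (A :|: D) B = P A B + P D B &
        D :&: B != set0 -> P (A :&: D) B = P A (D :&: B) * P D B].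

(* The state space X_K of the sub-network on K with the states outside K fixed
   to those of y is encoded as the set of joint states agreeing with y outside K
   (canonically in bijection with X_K). *)
Definition OmegaK (V : finType) (X : V -> finType) (K : {set V}) (y : conf X)
  : {set conf X} :=
  [set z : conf X | [forall v, (v \notin K) ==> (z v == y v)]].

Definition agree (V : finType) (X : V -> finType) (A : {set V}) (z w : conf X) : bool :=
  [forall v, (v \in A) ==> (z v == w v)].

(* Irrelevant natural extension of the sub-network on K (outside states from y):
   the full conditional probability measures P on X_K such that
   P(X_s | z_{N(s)}) \in M_{s | z_{P(s)}} for all s in K and all z. *)
Definition irr_ext (V : finType) (X : V -> finType) (par : V -> {set V})
  (M : forall s : V, conf X -> (X s -> R) -> Prop) (K : {set V}) (y : conf X)
  (P : {set conf X} -> {set conf X} -> R) : Prop :=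
  fcp (OmegaK K y) P /\
  forall s z, s \in K -> z \in OmegaK K y ->
    M s z (fun a : X s =>
             P [set w in OmegaK K y | w s == a]
               [set w in OmegaK K y | agree (NondescK par K s) z w]).

Definition expect (C : finType) (Om : {set C}) (P : {set C} -> {set C} -> R)
  (f : C -> R) : R :=
  \big[Rplus/0]_(z in Om) (f z * P [set z] Om).

Definition is_inf (A : R -> Prop) (r : R) : Prop :=
  (forall e, A e -> r <= e) /\ (forall r', (forall e, A e -> r' <= e) -> r' <= r).

Definition lower_exp (V : finType) (X : V -> finType) (par : V -> {set V})
  (M : forall s : V, conf X -> (X s -> R) -> Prop) (K : {set V}) (y : conf X)
  (f : conf X -> R) (r : R) : Prop :=
  is_inf (fun e => exists P, irr_ext par M K y P /\ e = expect (OmegaK K y) P f) r.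

(* Write a joint state as a pair (x_T, x_S).  Every P in the
   irrelevant natural extension of the whole network has a marginal on X_T lying
   in the extension of the network on T, and its restriction to each slice
   {x_T} * X_S lies in the extension of the network on S given x_{P(S)}: nodes
   of S have only descendants in S and nodes of T only parents in T, so the
   nondescendant conditioning events match.  The law of total expectation then
   gives E_P f >= E_{marginal} g.  Conversely, from Q on T and eps-optimal P_x
   on each slice one builds the composite full conditional measure (Bayes' rule
   for Q (x) P_x, with a lexicographic fallback on its null events); it lies in
   the extension of the whole network and has expectation <= E_Q g + eps.
   Slices are encoded as sets of joint states agreeing with a given one off S. *)

From HB Require Import structures.
From Stdlib Require Import Reals Lra Classical FunctionalExtensionality ClassicalEpsilon.
From mathcomp Require Import all_boot.
Set Implicit Arguments. Unset Strict Implicit. Unset Printing Implicit Defensive.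
Local Open Scope R_scope.

Lemma Rmult_gt0_inv a b : 0 <= a -> 0 <= b -> 0 < a * b -> 0 < a /\ 0 < b.
Proof. by move=> a0 b0 ab; split; nra. Qed.

Lemma Rsum_mull (I : Type) (r : seq I) (P : pred I) (F : I -> R) (c : R) :
  c * \big[Rplus/0]_(i <- r | P i) F i = \big[Rplus/0]_(i <- r | P i) (c * F i).
Proof. by elim/big_rec2: _ => [|i y1 y2 _ <-]; ring. Qed.

Lemma Rsum_le (I : Type) (r : seq I) (P : pred I) (F G : I -> R) :
  (forall i, P i -> F i <= G i) ->
  \big[Rplus/0]_(i <- r | P i) F i <= \big[Rplus/0]_(i <- r | P i) G i.
Proof. by move=> H; elim/big_rec2: _ => [|i y1 y2 Pi Hy]; [lra | have := H i Pi; lra]. Qed.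

Lemma Rsum_ge0 (I : Type) (r : seq I) (P : pred I) (F : I -> R) :
  (forall i, P i -> 0 <= F i) -> 0 <= \big[Rplus/0]_(i <- r | P i) F i.
Proof. by move=> H; elim/big_rec: _ => [|i y Pi Hy]; [lra | have := H i Pi; lra]. Qed.

Lemma Rsum_single (C : finType) (A : {set C}) (F : C -> R) x0 :
  x0 \in A -> (forall x, x \in A -> x != x0 -> F x = 0) ->
  \big[Rplus/0]_(x in A) F x = F x0.
Proof.
move=> x0A F0; rewrite (bigD1 x0 x0A) big1 /=; first lra.
by move=> x /andP[xA nx]; apply: F0.
Qed.

Section FullConditional.

Variables (C : finType) (Om : {set C}) (P : {set C} -> {set C} -> R).
Hypothesis HP : fcp Om P.
Arguments HP : clear implicits.
Implicit Types A B : {set C}.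

Lemma fcp_ge0 A B : A \subset Om -> B \subset Om -> B != set0 -> 0 <= P A B.
Proof. by move=> sA sB nB; have [] := HP A B A sA sB sA nB. Qed.

Lemma fcp_total B : B \subset Om -> B != set0 -> P Om B = 1.
Proof. by move=> sB nB; have [] := HP B B B sB sB sB nB. Qed.

Lemma fcp_self B : B \subset Om -> B != set0 -> P B B = 1.
Proof. by move=> sB nB; have [] := HP B B B sB sB sB nB. Qed.

Lemma fcp_set0 B : B \subset Om -> B != set0 -> P set0 B = 0.
Proof.
move=> sB nB; have [_ _ _ Hadd _] := HP set0 B set0 (sub0set Om) sB (sub0set Om) nB.
by move: Hadd; rewrite -setI_eq0 setI0 eqxx setU0 => /(_ isT); lra.
Qed.

Lemma fcp_setIr A B : A \subset Om -> B \subset Om -> B != set0 -> P A B = P (A :&: B) B.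
Proof.
move=> sA sB nB; have [_ _ HBB _ Hmul] := HP A B B sA sB sB nB.
by rewrite Hmul ?setIid // HBB Rmult_1_r.
Qed.

Lemma fcp_mono A (A' : {set C}) B :
  A \subset A' -> A' \subset Om -> B \subset Om -> B != set0 -> P A B <= P A' B.
Proof.
move=> sAA' sA' sB nB.
have sA : A \subset Om := subset_trans sAA' sA'.
have sD : A' :\: A \subset Om := subset_trans (subsetDl _ _) sA'.
have [_ _ _ Hadd _] := HP A B (A' :\: A) sA sB sD nB.
have eA' : A :|: A' :\: A = A' by rewrite -{2}(setID A' A) (setIidPr sAA').
rewrite -eA' Hadd; last by rewrite -setI_eq0 setDE setICA setICr setI0.
by have := fcp_ge0 sD sB nB; lra.
Qed.

Lemma fcp_set1_notin x B :
  x \in Om -> x \notin B -> B \subset Om -> B != set0 -> P [set x] B = 0.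
Proof.
move=> xO xB sB nB; rewrite fcp_setIr ?sub1set //.
by rewrite (_ : [set x] :&: B = set0) ?fcp_set0 //; apply/disjoint_setI0; rewrite disjoints1.
Qed.

Lemma fcp_sum_set1 A B : A \subset Om -> B \subset Om -> B != set0 ->
  P A B = \big[Rplus/0]_(x in A) P [set x] B.
Proof.
move=> + sB nB; elim: {A}_.+1 {-2}A (ltnSn #|A|) => // n IH A cA sA.
have [->|[x xA]] := set_0Vmem A; first by rewrite big_set0 fcp_set0.
have sAx : A :\ x \subset Om := subset_trans (subsetDl _ _) sA.
have sx : [set x] \subset Om by rewrite sub1set (subsetP sA).
have [_ _ _ Hadd _] := HP [set x] B (A :\ x) sx sB sAx nB.
rewrite -{1}(setD1K xA) Hadd ?disjoints1 ?setD11 //.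
have cAx : (#|A :\ x| < n)%N by move: cA; rewrite (cardsD1 x A) xA add1n ltnS.
rewrite (bigD1 x xA) (IH _ cAx sAx) /=.
by congr (_ + _); apply: eq_bigl => z; rewrite !inE andbC.
Qed.

End FullConditional.

Lemma fcp_setT_restrict (C : finType) (Om : {set C}) (P : {set C} -> {set C} -> R) :
  fcp setT P -> fcp Om P.
Proof.
move=> HP A B D _ sB _ nB.
have [P0 _ PBB Padd Pmul] := HP A B D (subsetT _) (subsetT _) (subsetT _) nB.
by split => //; rewrite (fcp_setIr HP) ?subsetT // (setIidPr sB).
Qed.

Lemma is_inf_approx (A : R -> Prop) r eps :
  is_inf A r -> 0 < eps -> exists2 e, A e & e <= r + eps.
Proof.
move=> [_ glb] heps; apply: NNPP => none.
have : r + eps <= r; last lra.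
by apply: glb => e Ae; apply: Rnot_lt_le => lt; apply: none; exists e => //; lra.
Qed.

Lemma is_inf_transfer (A B : R -> Prop) r :
  (forall e, A e -> exists2 e', B e' & e' <= e) ->
  (forall e', B e' -> forall eps, 0 < eps -> exists2 e, A e & e <= e' + eps) ->
  is_inf A r <-> is_inf B r.
Proof.
move=> AB BA; split => [[lb glb]|[lb glb]]; split.
- move=> e' Be'; apply: Rnot_lt_le => lt.
  have [e Ae le] := BA e' Be' ((r - e') / 2) ltac:(lra); have := lb e Ae; lra.
- by move=> r' lr'; apply: glb => e /AB[e' /lr' le1 le2]; lra.
- by move=> e /AB[e' /lb le1 le2]; lra.
- move=> r' lr'; apply: glb => e' Be'; apply: Rnot_lt_le => lt.
  have [e Ae le] := BA e' Be' ((r' - e') / 2) ltac:(lra); have := lr' e Ae; lra.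
Qed.

Section Dag.

Variables (V : finType) (par : V -> {set V}).
Local Notation edge := (edgeK par setT).
Local Notation below := (belowK par setT).
Implicit Types K : {set V}.

Lemma belowK_setT K s v : belowK par K s v -> below s v.
Proof.
have sub a b : edgeK par K a b -> edge a b by case/and3P=> _ _ h; rewrite /edgeK !inE.
case/existsP=> u /andP[e c]; apply/existsP; exists u; rewrite sub //=.
by apply: connect_sub c => a b /sub; apply: connect1.
Qed.

Lemma below_connect s v : below s v -> connect edge s v.
Proof. by case/existsP=> u /andP[e c]; apply: connect_trans (connect1 e) c. Qed.

Lemma below_connect_trans s u v : below s u -> connect edge u v -> below s v.
Proof.
case/existsP=> w /andP[e c] c'; apply/existsP; exists w; rewrite e /=.
exact: connect_trans c c'.
Qed.

Lemma connect_restrict K u v : connect edge u v ->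
  (forall w, connect edge u w -> connect edge w v -> w \in K) -> connect (edgeK par K) u v.
Proof.
case/connectP=> p; elim: p u => [|w p IH] u /=; first by move=> _ -> _; apply: connect0.
case/andP=> euw pw ev Hw.
have cwv : connect edge w v by apply/connectP; exists p.
have cuv : connect edge u v := connect_trans (connect1 euw) cwv.
apply: connect_trans (connect1 _) (IH w pw ev _).
  rewrite /edgeK (Hw u (connect0 _ _) cuv) (Hw w (connect1 euw) cwv).
  by case/and3P: euw.
by move=> w' c1 c2; apply: Hw (connect_trans (connect1 euw) c1) c2.
Qed.

Lemma below_restrict K s v : below s v -> s \in K ->
  (forall w, below s w -> connect edge w v -> w \in K) -> belowK par K s v.
Proof.
case/existsP=> u /andP[esu cuv] sK Hw.
have bsu : below s u by apply/existsP; exists u; rewrite esu connect0.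
apply/existsP; exists u; apply/andP; split.
  by move: esu; rewrite /edgeK !inE /= sK (Hw u bsu cuv).
apply: connect_restrict cuv _ => w c1 c2; apply: Hw c2.
exact: below_connect_trans bsu c1.
Qed.

Variable S : {set V}.
Hypothesis Hdag : acyclic par.
Hypothesis HST : forall t s, t \in ~: S -> s \in S -> below t s.
Arguments HST : clear implicits.

Lemma below_closed_S s w : s \in S -> below s w -> w \in S.
Proof.
move=> sS bsw; apply/negPn/negP => wS.
have bws : below w s by apply: HST; rewrite ?inE.
by have := Hdag s; rewrite (below_connect_trans bsw (below_connect bws)).
Qed.

Lemma par_closed_T t u : t \in ~: S -> u \in par t -> u \in ~: S.
Proof.
move=> tT ut; rewrite inE; apply/negP => uS.
have but : below u t by apply/existsP; exists t; rewrite /edgeK !inE ut connect0.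
by move: tT; rewrite inE (below_closed_S uS but).
Qed.

Lemma NondescK_setT_S s v : s \in S ->
  (v \in NondescK par setT s) = (v \notin S) || (v \in NondescK par S s).
Proof.
move=> sS; rewrite /NondescK /DescK !inE; have [vS|vS] /= := boolP (v \in S).
  rewrite !andbT; congr (~~ (_ || _)); apply/idP/idP; last exact: belowK_setT.
  by move=> bsv; apply: below_restrict bsv sS (fun w b _ => below_closed_S sS b).
rewrite andbT; apply/negP => /orP[/eqP vs|bsv]; first by rewrite vs sS in vS.
by rewrite (below_closed_S sS bsv) in vS.
Qed.

Lemma NondescK_setT_T t : t \in ~: S -> NondescK par setT t = NondescK par (~: S) t.
Proof.
move=> tT; apply/setP => v; rewrite /NondescK /DescK !inE; have [vS|vS] /= := boolP (v \in S).
  by rewrite (HST t v tT vS) orbT andbF.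
rewrite !andbT; congr (~~ (_ || _)); apply/idP/idP; last exact: belowK_setT.
move=> btv; apply: below_restrict btv tT _ => w _ cwv; rewrite inE.
apply/negP => wS; have bvw : below v w by apply: HST; rewrite ?inE.
by have := Hdag v; rewrite (below_connect_trans bvw cwv).
Qed.

End Dag.

Section Configurations.

Variables (V : finType) (X : V -> finType).
Implicit Types (S K N : {set V}) (x y z w : conf X) (B : {set conf X}).

Definition splice S (a b : conf X) : conf X :=
  finfun (fun v => if v \in S then a v else b v).

Lemma spliceE S a b v : splice S a b v = if v \in S then a v else b v.
Proof. by rewrite ffunE. Qed.

Lemma in_OmegaK K y z : reflect (forall v, v \notin K -> z v = y v) (z \in OmegaK K y).
Proof.
rewrite inE; apply: (iffP forallP) => H v; last by apply/implyP => /H ->.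
by move=> vK; move/implyP: (H v) => /(_ vK) /eqP.
Qed.

Lemma OmegaK_setT y : OmegaK setT y = setT.
Proof. by apply/setP => z; rewrite in_setT; apply/in_OmegaK => v; rewrite inE. Qed.

Lemma OmegaK_self K x : x \in OmegaK K x.
Proof. exact/in_OmegaK. Qed.

Lemma OmegaK_neq0 K x : OmegaK K x != set0.
Proof. by apply/set0Pn; exists x; apply: OmegaK_self. Qed.

Lemma splice_OmegaK S y z : splice S y z \in OmegaK (~: S) y.
Proof. by apply/in_OmegaK => v; rewrite inE negbK spliceE => ->. Qed.

Lemma OmegaK_spliceE S y x z :
  x \in OmegaK (~: S) y -> (z \in OmegaK S x) = (splice S y z == x).
Proof.
move/in_OmegaK => Hx; apply/in_OmegaK/eqP => [Hz|<- v vS]; last by rewrite spliceE (negbTE vS).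
apply/ffunP => v; rewrite spliceE; case: ifP => vS; first by rewrite Hx // inE vS.
by rewrite Hz // vS.
Qed.

Lemma splice_id S y x : x \in OmegaK (~: S) y -> splice S y x = x.
Proof. by move=> Hx; apply/eqP; rewrite -OmegaK_spliceE //; apply: OmegaK_self. Qed.

Lemma agree_splicel S N y z w : N \subset ~: S -> agree N (splice S y z) w = agree N z w.
Proof.
move=> sN; apply: eq_forallb => v; have [vN|] //= := boolP (v \in N).
by move: (subsetP sN v vN); rewrite inE spliceE => /negbTE ->.
Qed.

Lemma agree_splicer S N y z w : N \subset ~: S -> agree N z (splice S y w) = agree N z w.
Proof.
move=> sN; apply: eq_forallb => v; have [vN|] //= := boolP (v \in N).
by move: (subsetP sN v vN); rewrite inE spliceE => /negbTE ->.
Qed.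

Lemma imset_splice_sub S y B : splice S y @: B \subset OmegaK (~: S) y.
Proof. by apply/subsetP => x /imsetP[z _ ->]; apply: splice_OmegaK. Qed.

Lemma mem_imset_splice S y x B : x \in OmegaK (~: S) y ->
  (x \in splice S y @: B) = (B :&: OmegaK S x != set0).
Proof.
move=> Hx; apply/imsetP/set0Pn => [[z zB ->]|[z]].
  by exists z; rewrite in_setI zB (OmegaK_spliceE _ (splice_OmegaK S y z)) eqxx.
by rewrite in_setI (OmegaK_spliceE _ Hx) => /andP[zB /eqP <-]; exists z.
Qed.

Lemma imset_splice_setT S y : splice S y @: setT = OmegaK (~: S) y.
Proof.
apply/eqP; rewrite eqEsubset imset_splice_sub; apply/subsetP => x xO.
by apply/imsetP; exists x; rewrite ?in_setT ?splice_id.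
Qed.

Lemma preimset_splice_OmegaK S y : splice S y @^-1: OmegaK (~: S) y = setT.
Proof. by apply/setP => z; rewrite inE in_setT splice_OmegaK. Qed.

Lemma imset_splice_preimset S y B : B \subset OmegaK (~: S) y ->
  splice S y @: (splice S y @^-1: B) = B.
Proof.
move=> sB; apply/setP => x; apply/imsetP/idP => [[z + ->]|xB]; first by rewrite inE.
by exists x; rewrite ?inE splice_id // (subsetP sB).
Qed.

Lemma preimset_splice_set1 S y x :
  x \in OmegaK (~: S) y -> splice S y @^-1: [set x] = OmegaK S x.
Proof. by move=> xO; apply/setP => z; rewrite (OmegaK_spliceE _ xO) !inE. Qed.

Lemma preimset_splice_neq0 S y B :
  B \subset OmegaK (~: S) y -> B != set0 -> splice S y @^-1: B != set0.
Proof.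
by move=> sB /set0Pn[x xB]; apply/set0Pn; exists x; rewrite inE splice_id // (subsetP sB).
Qed.

Lemma preimset_splice_sel S y t (a : X t) : t \notin S ->
  splice S y @^-1: [set w in OmegaK (~: S) y | w t == a] = [set w : conf X | w t == a].
Proof.
by move=> tS; apply/setP => w; rewrite 3!inE splice_OmegaK spliceE (negbTE tS).
Qed.

Lemma preimset_splice_agree S N y z : N \subset ~: S ->
  splice S y @^-1: [set w in OmegaK (~: S) y | agree N z w] = [set w | agree N z w].
Proof. by move=> sN; apply/setP => w; rewrite 3!inE splice_OmegaK agree_splicer. Qed.

(* Conditioning on the nondescendants in the whole network versus in the
   sub-network on [S], once the states outside [S] are fixed. *)
Lemma agree_OmegaK_setT S (NG N1 : {set V}) y x z :
  (forall v, (v \in NG) = (v \notin S) || (v \in N1)) -> z \in OmegaK S x ->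
  [set w in OmegaK setT y | agree NG z w] = [set w in OmegaK S x | agree N1 z w].
Proof.
move=> HN /in_OmegaK zx; rewrite OmegaK_setT; apply/setP => w; rewrite !inE /=.
apply/forallP/andP => [H|[/forallP wx /forallP H] v].
  split; apply/forallP => v; apply/implyP => vA; have := H v; rewrite HN vA ?orbT //=.
  by move/eqP <-; rewrite zx.
rewrite HN; apply/implyP => /orP[vS|vN]; last by have := H v; rewrite vN.
by have := wx v; rewrite vS /= => /eqP ->; rewrite zx.
Qed.

End Configurations.

Definition Rltb (a b : R) : bool := if Rlt_dec a b then true else false.

Lemma RltbP a b : reflect (a < b) (Rltb a b).
Proof. by rewrite /Rltb; case: Rlt_dec => h; constructor. Qed.

Lemma pick_subset (T : finType) (A B : {set T}) a :
  A \subset B -> [pick x in B] = Some a -> a \in A -> [pick x in A] = Some a.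
Proof.
move=> sAB; rewrite /pick /enum_mem; elim: (Finite.enum T) => [|b s IH] //=.
case: ifP => bB /=; first by case=> <- ->.
by rewrite (contraFF (subsetP sAB b) bB).
Qed.

Section Composite.

Variables (V : finType) (X : V -> finType) (S : {set V}) (y : conf X).
Variables (Q : {set conf X} -> {set conf X} -> R)
          (Px : conf X -> {set conf X} -> {set conf X} -> R).
Hypothesis HQ : fcp (OmegaK (~: S) y) Q.
Hypothesis HP : forall x, fcp (OmegaK S x) (Px x).
Arguments HQ : clear implicits.
Arguments HP : clear implicits.
Implicit Types (x z : conf X) (A B D E F : {set conf X}).

Local Notation OmT := (OmegaK (~: S) y).
Local Notation pr B := (splice S y @: B).

Let prS B : pr B \subset OmT := imset_splice_sub S y B.
Let pr_neq0 B : B != set0 -> pr B != set0.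
Proof. by rewrite imset_eq0. Qed.

Definition slice_prob x E := Px x (E :&: OmegaK S x) (OmegaK S x).

Definition mix B E := \big[Rplus/0]_(x in OmT) (Q [set x] (pr B) * slice_prob x E).

Definition support B := [set x in pr B | Rltb 0 (Q [set x] (pr B))].

Definition pivot B := odflt y [pick x in support B].

(* The joint law of [Q] on the [~: S]-part and [Px x] on the slice of each [x],
   conditioned on [B]; when [B] is null for this mixture, the conditioning is
   passed to the slice of the first point of the [Q]-support of the projection
   of [B], as in a lexicographic probability. *)
Definition composite A B :=
  if Rlt_dec 0 (mix B B) then mix B (A :&: B) / mix B B
  else Px (pivot B) (A :&: OmegaK S (pivot B)) (B :&: OmegaK S (pivot B)).

Lemma slice_prob_ge0 x E : 0 <= slice_prob x E.
Proof. exact: (fcp_ge0 (HP x) (subsetIr _ _) (subxx _) (OmegaK_neq0 S x)). Qed.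

Lemma slice_prob_mono x E F : E \subset F -> slice_prob x E <= slice_prob x F.
Proof.
by move=> sEF; apply: (fcp_mono (HP x) (setSI _ sEF) (subsetIr _ _) (subxx _) (OmegaK_neq0 S x)).
Qed.

Lemma slice_prob_eq0 x E : E :&: OmegaK S x = set0 -> slice_prob x E = 0.
Proof. by move=> h; rewrite /slice_prob h (fcp_set0 (HP x) (subxx _) (OmegaK_neq0 S x)). Qed.

Lemma slice_prob_eq1 x E : OmegaK S x \subset E -> slice_prob x E = 1.
Proof.
by move=> h; rewrite /slice_prob (setIidPr h) (fcp_self (HP x) (subxx _) (OmegaK_neq0 S x)).
Qed.

Lemma slice_prob_setU x E F : [disjoint E & F] ->
  slice_prob x (E :|: F) = slice_prob x E + slice_prob x F.
Proof.
move=> dEF; rewrite /slice_prob setIUl.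
have [_ _ _ -> //] := HP x _ _ _ (subsetIr E _) (subxx _) (subsetIr F _) (OmegaK_neq0 S x).
exact: disjointW (subsetIl _ _) (subsetIl _ _) dEF.
Qed.

Lemma Q_set1_ge0 x B : x \in OmT -> B != set0 -> 0 <= Q [set x] (pr B).
Proof. by move=> xO nB; apply: (fcp_ge0 HQ _ (prS B) (pr_neq0 nB)); rewrite sub1set. Qed.

Lemma Q_set1_chain D B x : D :&: B != set0 -> x \in pr (D :&: B) ->
  Q [set x] (pr B) = Q (pr (D :&: B)) (pr B) * Q [set x] (pr (D :&: B)).
Proof.
move=> nDB xp; have nB : B != set0 by apply: contraNneq nDB => ->; rewrite setI0.
have sDB : pr (D :&: B) \subset pr B := imsetS _ (subsetIr D B).
have sx : [set x] \subset OmT by rewrite sub1set (subsetP (prS _) x xp).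
have [_ _ _ _ Hmul] := HQ _ _ _ sx (prS B) (prS (D :&: B)) (pr_neq0 nB).
rewrite (setIidPl sDB) in Hmul; rewrite Rmult_comm -Hmul ?pr_neq0 //.
by rewrite (setIidPl _) // sub1set.
Qed.

Lemma mix_ge0 B E : B != set0 -> 0 <= mix B E.
Proof.
by move=> nB; apply: Rsum_ge0 => x xO; apply: Rmult_le_pos (Q_set1_ge0 xO nB) (slice_prob_ge0 x E).
Qed.

Lemma mix_mono B E F : B != set0 -> E \subset F -> mix B E <= mix B F.
Proof.
move=> nB sEF; apply: Rsum_le => x xO.
exact: Rmult_le_compat_l (Q_set1_ge0 xO nB) (slice_prob_mono x sEF).
Qed.

Lemma mix_chain D B F : D :&: B != set0 -> F \subset D :&: B ->
  mix B F = Q (pr (D :&: B)) (pr B) * mix (D :&: B) F.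
Proof.
move=> nDB sF; rewrite /mix Rsum_mull; apply: eq_bigr => x xO.
have [xp|xp] := boolP (x \in pr (D :&: B)); first by rewrite (Q_set1_chain nDB xp) Rmult_assoc.
rewrite slice_prob_eq0; first ring.
move: xp; rewrite (mem_imset_splice _ xO) negbK => /eqP h.
by apply/eqP; rewrite -subset0 -h setSI.
Qed.

(* [pr B] has [Q]-mass one given itself, so its [Q]-support is not empty. *)
Lemma pivot_pick B : B != set0 -> [pick x in support B] = Some (pivot B).
Proof.
move=> nB; rewrite /pivot; case: pickP => [a //|none].
have := fcp_self HQ (prS B) (pr_neq0 nB).
rewrite (fcp_sum_set1 HQ (prS B) (prS B) (pr_neq0 nB)) big1 => [/esym/R1_neq_R0 []|x xp].
have := none x; rewrite inE xp /= => /negbT/RltbP.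
by move/Rnot_lt_le => h; apply: Rle_antisym h (Q_set1_ge0 (subsetP (prS B) x xp) nB).
Qed.

Lemma pivot_spec B : B != set0 ->
  [/\ pivot B \in pr B, pivot B \in OmT, B :&: OmegaK S (pivot B) != set0
    & 0 < Q [set pivot B] (pr B)].
Proof.
move=> nB; have := pivot_pick nB; case: pickP => // a + [<-].
rewrite inE => /andP[ap /RltbP Qa]; have aO := subsetP (prS B) a ap.
by split => //; rewrite -(mem_imset_splice _ aO).
Qed.

Lemma slice_prob_preimset x E : x \in OmT -> E \subset OmT ->
  slice_prob x (splice S y @^-1: E) = if x \in E then 1 else 0.
Proof.
move=> xO sE; have [xE|xE] := ifP.
  by apply: slice_prob_eq1; apply/subsetP => z; rewrite (OmegaK_spliceE _ xO) inE => /eqP ->.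
apply: slice_prob_eq0; apply/setP => z; rewrite in_setI (OmegaK_spliceE _ xO) !inE.
by apply/negbTE; apply: contraFN xE => /andP[+ /eqP <-].
Qed.

Lemma mix_preimset B E : B != set0 -> E \subset OmT ->
  mix B (splice S y @^-1: E) = Q E (pr B).
Proof.
move=> nB sE; rewrite (fcp_sum_set1 HQ sE (prS B) (pr_neq0 nB)) /mix (big_setID E) /=.
rewrite (setIidPr sE) [X in _ + X]big1 => [|x]; last first.
  by rewrite inE => /andP[xE xO]; rewrite slice_prob_preimset // (negbTE xE) Rmult_0_r.
rewrite Rplus_0_r; apply: eq_bigr => x xE.
by rewrite slice_prob_preimset ?xE ?Rmult_1_r // (subsetP sE).
Qed.

Lemma composite_preimset A B : A \subset OmT -> B \subset OmT -> B != set0 ->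
  composite (splice S y @^-1: A) (splice S y @^-1: B) = Q A B.
Proof.
move=> sA sB nB; have nB' := preimset_splice_neq0 sB nB.
have prB := imset_splice_preimset sB.
rewrite /composite -preimsetI !mix_preimset ?(subset_trans (subsetIl _ _)) // prB.
rewrite (fcp_self HQ sB nB) -(fcp_setIr HQ sA sB nB).
by case: Rlt_dec => h /=; [field | lra].
Qed.

Lemma composite_ge0 A B : B != set0 -> 0 <= composite A B.
Proof.
move=> nB; rewrite /composite; case: Rlt_dec => h /=.
  by apply: Rmult_le_pos (mix_ge0 _ nB) _; left; apply: Rinv_0_lt_compat.
have [_ _ nBx _] := pivot_spec nB.
exact: (fcp_ge0 (HP _) (subsetIr _ _) (subsetIr _ _) nBx).
Qed.

Lemma composite_setT B : B != set0 -> composite setT B = 1.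
Proof.
move=> nB; rewrite /composite !setTI; case: Rlt_dec => h /=; first by field; lra.
have [_ _ nBx _] := pivot_spec nB.
exact: (fcp_total (HP _) (subsetIr _ _) nBx).
Qed.

Lemma composite_self B : B != set0 -> composite B B = 1.
Proof.
move=> nB; rewrite /composite setIid; case: Rlt_dec => h /=; first by field; lra.
have [_ _ nBx _] := pivot_spec nB.
exact: (fcp_self (HP _) (subsetIr _ _) nBx).
Qed.

Lemma composite_setU A D B : B != set0 -> [disjoint A & D] ->
  composite (A :|: D) B = composite A B + composite D B.
Proof.
move=> nB dAD; rewrite /composite; case: Rlt_dec => h /=.
  rewrite -Rdiv_plus_distr /mix -big_split /=; congr (_ / _); apply: eq_bigr => x _.
  rewrite -Rmult_plus_distr_l setIUl slice_prob_setU //.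
  exact: disjointW (subsetIl _ _) (subsetIl _ _) dAD.
have [_ _ nBx _] := pivot_spec nB.
rewrite setIUl; have [_ _ _ -> //] := HP _ _ _ _ (subsetIr A _) (subsetIr B _) (subsetIr D _) nBx.
exact: disjointW (subsetIl _ _) (subsetIl _ _) dAD.
Qed.

Lemma composite_chain_mix A D B : D :&: B != set0 -> 0 < mix B B ->
  composite (A :&: D) B = composite A (D :&: B) * composite D B.
Proof.
move=> nDB hB; have nB : B != set0 by apply: contraNneq nDB => ->; rewrite setI0.
set c := Q (pr (D :&: B)) (pr B).
have K1 : mix B (A :&: D :&: B) = c * mix (D :&: B) (A :&: (D :&: B)).
  by rewrite -setIA; apply: mix_chain nDB (subsetIr _ _).
have K2 : mix B (D :&: B) = c * mix (D :&: B) (D :&: B) := mix_chain nDB (subxx _).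
rewrite /composite; case: (Rlt_dec 0 (mix B B)) => // _ /=.
rewrite K1 K2; case: Rlt_dec => hDB /=; first by field; lra.
have e0 : mix (D :&: B) (D :&: B) = 0.
  by apply: Rle_antisym (Rnot_lt_le _ _ hDB) (mix_ge0 _ nDB).
have eA0 : mix (D :&: B) (A :&: (D :&: B)) = 0.
  apply: Rle_antisym (mix_ge0 _ nDB); rewrite -e0; exact: mix_mono nDB (subsetIr _ _).
by rewrite e0 eA0 !Rmult_0_r /Rdiv Rmult_0_l Rmult_0_r.
Qed.

Lemma pivot_setI D B : D :&: B != set0 -> ~ 0 < mix B B -> pivot B \in pr (D :&: B) ->
  ~ 0 < mix (D :&: B) (D :&: B) /\ pivot (D :&: B) = pivot B.
Proof.
move=> nDB hB x0DB; have nB : B != set0 by apply: contraNneq nDB => ->; rewrite setI0.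
have [_ x0O _ Qx0] := pivot_spec nB; set x0 := pivot B in x0DB x0O Qx0 *.
set c := Q (pr (D :&: B)) (pr B).
have c0 : 0 <= c := fcp_ge0 HQ (prS _) (prS B) (pr_neq0 nB).
have [cpos qpos] : 0 < c /\ 0 < Q [set x0] (pr (D :&: B)).
  by apply: Rmult_gt0_inv c0 (Q_set1_ge0 x0O nDB) _; rewrite -(Q_set1_chain nDB x0DB).
split.
  move=> hDB; apply: hB; apply: Rlt_le_trans (mix_mono nB (subsetIr D B)).
  by rewrite (mix_chain nDB (subxx _)); apply: Rmult_lt_0_compat.
have x0sup : x0 \in support (D :&: B) by rewrite inE x0DB; apply/RltbP.
have sup : support (D :&: B) \subset support B.
  apply/subsetP => x; rewrite !inE => /andP[xDB /RltbP qx].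
  rewrite (subsetP (imsetS _ (subsetIr D B)) x xDB) /=; apply/RltbP.
  by rewrite (Q_set1_chain nDB xDB); apply: Rmult_lt_0_compat.
by have := pick_subset sup (pivot_pick nB) x0sup; rewrite (pivot_pick nDB) => -[].
Qed.

Lemma composite_chain_pivot A D B : D :&: B != set0 -> ~ 0 < mix B B ->
  composite (A :&: D) B = composite A (D :&: B) * composite D B.
Proof.
move=> nDB hB; have nB : B != set0 by apply: contraNneq nDB => ->; rewrite setI0.
have [_ x0O nBx _] := pivot_spec nB.
rewrite /composite; case: (Rlt_dec 0 (mix B B)) => // _ /=.
set x0 := pivot B in x0O nBx *; set Bx := B :&: OmegaK S x0.
have sBx : Bx \subset OmegaK S x0 := subsetIr _ _.
have [x0DB|x0DB] := boolP (x0 \in pr (D :&: B)).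
  have [hDB ->] := pivot_setI nDB hB x0DB.
  have eAD : A :&: D :&: OmegaK S x0 = A :&: OmegaK S x0 :&: (D :&: OmegaK S x0).
    by rewrite setIACA setIid.
  have eDB : D :&: OmegaK S x0 :&: Bx = D :&: B :&: OmegaK S x0 by rewrite setIACA setIid.
  case: Rlt_dec => // _ /=; rewrite eAD.
  have [_ _ _ _ ->] := HP x0 _ _ _ (subsetIr A _) sBx (subsetIr D _) nBx.
    by rewrite eDB.
  by rewrite eDB -(mem_imset_splice _ x0O).
have null E : E \subset D -> Px x0 (E :&: OmegaK S x0) Bx = 0.
  move=> sE; rewrite (fcp_setIr (HP x0) (subsetIr _ _) sBx nBx).
  rewrite (_ : _ :&: _ = set0) ?(fcp_set0 (HP x0) sBx nBx) //; apply/eqP; rewrite -subset0.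
  move: x0DB; rewrite (mem_imset_splice _ x0O) negbK => /eqP <-.
  by rewrite /Bx setIACA setIid; apply/setSI/setSI.
by rewrite !null ?Rmult_0_r // subsetIr.
Qed.

Lemma composite_fcp : fcp setT composite.
Proof.
move=> A B D _ _ _ nB; split.
- exact: composite_ge0.
- exact: composite_setT.
- exact: composite_self.
- exact: composite_setU.
- move=> nDB; have [hB|hB] := Rlt_dec 0 (mix B B).
    exact: composite_chain_mix.
  exact: composite_chain_pivot.
Qed.

Lemma composite_slice x0 A B : x0 \in OmT -> B \subset OmegaK S x0 -> B != set0 ->
  composite A B = Px x0 (A :&: OmegaK S x0) B.
Proof.
move=> x0O sB nB; have sBO : B :&: OmegaK S x0 = B by apply/setIidPl.
have pB : pr B = [set x0].
  apply/setP => x; rewrite inE; apply/imsetP/eqP => [[w wB ->]|->].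
    by apply/eqP; rewrite -(OmegaK_spliceE _ x0O) (subsetP sB).
  case/set0Pn: nB => w wB; exists w => //.
  by apply/esym/eqP; rewrite -(OmegaK_spliceE _ x0O) (subsetP sB).
have sx0 : [set x0] \subset OmT by rewrite sub1set.
have nx0 : [set x0] != set0 by apply/set0Pn; exists x0; rewrite inE.
have mixE E : mix B E = slice_prob x0 E.
  rewrite /mix pB (Rsum_single x0O) => [|x xO nx].
    by rewrite (fcp_self HQ sx0 nx0) Rmult_1_l.
  by rewrite (fcp_set1_notin HQ xO _ sx0 nx0) ?Rmult_0_l // inE.
rewrite /composite !mixE /slice_prob; case: Rlt_dec => h /=.
  have [_ _ _ _ Hmul] := HP x0 _ _ _ (subsetIr A _) (subxx _) sB (OmegaK_neq0 S x0).
  rewrite setIAC Hmul sBO ?sBO //; rewrite sBO in h; field; lra.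
have [+ _ _ _] := pivot_spec nB; rewrite pB inE => /eqP ->.
by rewrite sBO.
Qed.

Lemma composite_set1_setT z :
  composite [set z] setT = \big[Rplus/0]_(x in OmT) (Q [set x] OmT * slice_prob x [set z]).
Proof.
have nO : OmT != set0 := OmegaK_neq0 _ y.
have mix1 : mix setT setT = 1.
  have nT : [set: conf X] != set0 by apply/set0Pn; exists y.
  rewrite -{2}(preimset_splice_OmegaK S y) (mix_preimset nT (subxx _)).
  by rewrite imset_splice_setT (fcp_self HQ (subxx _) nO).
rewrite /composite mix1 setIT; case: Rlt_dec => h /=; last lra.
by rewrite /Rdiv Rinv_1 Rmult_1_r /mix imset_splice_setT.
Qed.

Lemma slice_prob_expect x f :
  \big[Rplus/0]_(z in [set: conf X]) (f z * slice_prob x [set z]) = expect (OmegaK S x) (Px x) f.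
Proof.
rewrite /expect [RHS]big_mkcond /=; apply: eq_big => [z|z _]; first by rewrite in_setT.
case: ifP => zx; first by rewrite /slice_prob (setIidPl _) // sub1set.
rewrite slice_prob_eq0 ?Rmult_0_r //; apply/setP => w; rewrite in_setI in_set1 in_set0.
by apply/negbTE; apply: contraFN zx => /andP[/eqP <-].
Qed.

Lemma expect_mixture (P : {set conf X} -> {set conf X} -> R) f :
  (forall z, P [set z] setT = \big[Rplus/0]_(x in OmT) (Q [set x] OmT * slice_prob x [set z])) ->
  expect setT P f = \big[Rplus/0]_(x in OmT) (Q [set x] OmT * expect (OmegaK S x) (Px x) f).
Proof.
move=> PE; rewrite [LHS]/expect; under eq_bigr => z _ do rewrite PE Rsum_mull.
rewrite exchange_big /=; apply: eq_bigr => x _.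
rewrite -slice_prob_expect Rsum_mull; apply: eq_bigr => z _.
by rewrite -!Rmult_assoc (Rmult_comm (f z)).
Qed.

Lemma expect_composite f : expect setT composite f =
  \big[Rplus/0]_(x in OmT) (Q [set x] OmT * expect (OmegaK S x) (Px x) f).
Proof. exact: expect_mixture composite_set1_setT. Qed.

End Composite.

Section Marginal.

Variables (V : finType) (X : V -> finType) (S : {set V}) (y : conf X)
          (P : {set conf X} -> {set conf X} -> R).
Hypothesis HP : fcp setT P.
Arguments HP : clear implicits.

Definition marg (A B : {set conf X}) := P (splice S y @^-1: A) (splice S y @^-1: B).

Lemma fcp_marg : fcp (OmegaK (~: S) y) marg.
Proof.
move=> A B D sA sB sD nB; rewrite /marg.
have [P0 P1 PBB Padd Pmul] := HP (splice S y @^-1: A) (splice S y @^-1: B)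
  (splice S y @^-1: D) (subsetT _) (subsetT _) (subsetT _) (preimset_splice_neq0 sB nB).
split => //; first by rewrite preimset_splice_OmegaK.
  by move=> dAD; rewrite preimsetU Padd // -setI_eq0 -preimsetI (disjoint_setI0 dAD) preimset0.
move=> nDB; rewrite !preimsetI Pmul // -preimsetI.
exact: preimset_splice_neq0 (subset_trans (subsetIl _ _) sD) nDB.
Qed.

Lemma expect_marg f : expect setT P f = \big[Rplus/0]_(x in OmegaK (~: S) y)
  (marg [set x] (OmegaK (~: S) y) * expect (OmegaK S x) P f).
Proof.
have HPx x : fcp (OmegaK S x) P := fcp_setT_restrict HP.
apply: (expect_mixture (Px := fun=> P) HPx) => z; set x := splice S y z.
have xO : x \in OmegaK (~: S) y := splice_OmegaK S y z.
have zx : z \in OmegaK S x by rewrite (OmegaK_spliceE _ xO).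
rewrite (Rsum_single xO) => [|x' x'O nx']; last first.
  rewrite (slice_prob_eq0 HPx) ?Rmult_0_r //; apply/disjoint_setI0; rewrite disjoints1.
  by rewrite (OmegaK_spliceE _ x'O) eq_sym.
rewrite /marg preimset_splice_set1 // preimset_splice_OmegaK /slice_prob (setIidPl _) ?sub1set //.
have nT : [set: conf X] != set0 by apply/set0Pn; exists y.
have [_ _ _ _ Hmul] := HP [set z] setT (OmegaK S x) (subsetT _) (subsetT _) (subsetT _) nT.
rewrite !setIT (setIidPl _) ?sub1set // in Hmul.
by rewrite Hmul ?OmegaK_neq0 // Rmult_comm.
Qed.

End Marginal.

Section Network.

Variables (V : finType) (X : V -> finType) (par : V -> {set V})
          (M : forall s : V, conf X -> (X s -> R) -> Prop).
Arguments M : clear implicits.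
Hypothesis Hdag : acyclic par.
Variable S : {set V}.
Hypothesis HST : forall t s, t \in ~: S -> s \in S -> belowK par setT t s.
Arguments HST : clear implicits.

Lemma irr_ext_marg y P : irr_ext par M setT y P -> irr_ext par M (~: S) y (marg S y P).
Proof.
move=> [HPf HPc]; rewrite OmegaK_setT in HPf; split; first exact: fcp_marg.
move=> t z tT _; have := HPc t z (in_setT t); rewrite OmegaK_setT in_setT => /(_ isT) H.
have sN : NondescK par (~: S) t \subset ~: S := subsetDl _ _.
have tS : t \notin S by rewrite -in_setC.
apply: (eq_ind _ (M t z) H); apply: functional_extensionality => a.
rewrite /marg preimset_splice_sel // preimset_splice_agree //.
by rewrite (NondescK_setT_T Hdag HST tT) !setIdE !setTI.
Qed.

Lemma irr_ext_slice y P x : irr_ext par M setT y P -> irr_ext par M S x P.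
Proof.
move=> [HPf HPc]; rewrite OmegaK_setT in HPf; split; first exact: fcp_setT_restrict.
move=> s z sS zx; have := HPc s z (in_setT s); rewrite {1}OmegaK_setT in_setT => /(_ isT).
rewrite (agree_OmegaK_setT y (fun v => NondescK_setT_S Hdag HST v sS) zx) => H.
set B := [set w in OmegaK S x | agree (NondescK par S s) z w] in H *.
have nB : B != set0 by apply/set0Pn; exists z; rewrite inE zx; apply/forallP => v; apply/implyP.
apply: (eq_ind _ (M s z) H); apply: functional_extensionality => a.
rewrite (fcp_setIr HPf) ?subsetT // [RHS](fcp_setIr HPf) ?subsetT //.
congr (P _ B); apply/setP => w; rewrite !in_setI; have [wB|] := boolP (w \in B); rewrite ?andbF //.
have wx : w \in OmegaK S x by move: wB; rewrite inE => /andP[].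
by rewrite !andbT OmegaK_setT 2!inE wx in_setT.
Qed.

Hypothesis HM : local_models par M.

Lemma irr_ext_composite y Q Px : irr_ext par M (~: S) y Q ->
  (forall x, irr_ext par M S x (Px x)) -> irr_ext par M setT y (composite S y Q Px).
Proof.
move=> [HQ HQc] HPx; have HP x : fcp (OmegaK S x) (Px x) by case: (HPx x).
split => [|s z _ _]; rewrite OmegaK_setT; first exact: composite_fcp.
set x := splice S y z; have xO : x \in OmegaK (~: S) y := splice_OmegaK S y z.
have [sS|sS] := boolP (s \in S).
  have zx : z \in OmegaK S x by rewrite (OmegaK_spliceE _ xO).
  have := (HPx x).2 s z sS zx.
  have eB := agree_OmegaK_setT y (fun v => NondescK_setT_S Hdag HST v sS) zx.
  rewrite OmegaK_setT in eB; rewrite eB.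
  set B := [set w in OmegaK S x | agree (NondescK par S s) z w] => H.
  have nB : B != set0 by apply/set0Pn; exists z; rewrite inE zx; apply/forallP => v; apply/implyP.
  have sB : B \subset OmegaK S x by rewrite /B setIdE subsetIl.
  apply: (eq_ind _ (M s z) H); apply: functional_extensionality => a.
  by rewrite (composite_slice HQ HP _ xO sB nB) !setIdE setTI setIC.
have sT : s \in ~: S by rewrite inE.
have sN : NondescK par (~: S) s \subset ~: S := subsetDl _ _.
have Hpar u : u \in par s -> x u = z u.
  by move/(par_closed_T Hdag HST sT); rewrite inE spliceE => /negbTE ->.
apply/((HM s).2 x z Hpar); apply: (eq_ind _ (M s x) (HQc s x sT xO)).
apply: functional_extensionality => a.
rewrite (NondescK_setT_T Hdag HST sT).
have -> : [set w : conf X in setT | w s == a] =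
          splice S y @^-1: [set w in OmegaK (~: S) y | w s == a].
  by rewrite preimset_splice_sel // setIdE setTI.
have -> : [set w in setT | agree (NondescK par (~: S) s) z w] =
          splice S y @^-1: [set w in OmegaK (~: S) y | agree (NondescK par (~: S) s) x w].
  apply/setP => w; rewrite [in LHS]inE in_setT 2![in RHS]inE splice_OmegaK.
  by rewrite agree_splicel // agree_splicer.
rewrite composite_preimset ?setIdE ?subsetIl //; apply/set0Pn; exists x.
by rewrite in_setI xO inE; apply/forallP => v; apply/implyP.
Qed.

End Network.

Section LowerExpectation.

Variables (V : finType) (X : V -> finType) (par : V -> {set V})
          (M : forall s : V, conf X -> (X s -> R) -> Prop).
Hypotheses (Hdag : acyclic par) (HM : local_models par M).
Variable S : {set V}.
Hypothesis HST : forall t s, t \in ~: S -> s \in S -> belowK par setT t s.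
Variables f g : conf X -> R.
Hypothesis Hg : forall x, lower_exp par M S x f (g x).

Lemma expect_marg_le y P : irr_ext par M setT y P ->
  expect (OmegaK (~: S) y) (marg S y P) g <= expect (OmegaK setT y) P f.
Proof.
move=> HPi; have HPf : fcp setT P by case: HPi; rewrite OmegaK_setT.
rewrite OmegaK_setT (expect_marg S y HPf f); apply: Rsum_le => x xO.
rewrite Rmult_comm; apply: Rmult_le_compat_l.
  apply: (fcp_ge0 (fcp_marg HPf)) => //; first by rewrite sub1set.
  by apply/set0Pn; exists y; apply: OmegaK_self.
by apply: (Hg x).1; exists P; split => //; apply: irr_ext_slice HPi.
Qed.

Lemma composite_expect_le y Q eps : irr_ext par M (~: S) y Q -> 0 < eps ->
  exists2 P, irr_ext par M setT y P &
    expect (OmegaK setT y) P f <= expect (OmegaK (~: S) y) Q g + eps.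
Proof.
move=> HQi heps; have HQ : fcp (OmegaK (~: S) y) Q by case: HQi.
have near x : exists P, irr_ext par M S x P /\ expect (OmegaK S x) P f <= g x + eps.
  by have [e [P [HP ->]] le] := is_inf_approx (Hg x) heps; exists P.
pose Px x := proj1_sig (constructive_indefinite_description _ (near x)).
have HPx x : irr_ext par M S x (Px x) /\ expect (OmegaK S x) (Px x) f <= g x + eps.
  exact: proj2_sig (constructive_indefinite_description _ (near x)).
have HP x : fcp (OmegaK S x) (Px x) by case: (HPx x) => [[]].
exists (composite S y Q Px); first by apply: irr_ext_composite => // x; case: (HPx x).
have nO := OmegaK_neq0 (~: S) y.
rewrite OmegaK_setT (expect_composite HQ HP f) /expect -(Rmult_1_r eps).
rewrite -(fcp_self HQ (subxx _) nO) (fcp_sum_set1 HQ (subxx _) (subxx _) nO).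
rewrite Rsum_mull -big_split /=; apply: Rsum_le => x xO.
rewrite -Rmult_plus_distr_r [X in _ <= X]Rmult_comm; apply: Rmult_le_compat_l (proj2 (HPx x)).
by apply: (fcp_ge0 HQ _ (subxx _) nO); apply/subsetP => w /set1P ->.
Qed.

End LowerExpectation.

Unset Implicit Arguments.
Theorem theorem3 (V : finType) (X : V -> finType) (par : V -> {set V})
  (M : forall s : V, conf X -> (X s -> R) -> Prop)
  (HX : forall s, (0 < #|X s|)%N)
  (Hdag : acyclic par)
  (HM : local_models par M)
  (S : {set V})
  (HST : forall t s, t \in ~: S -> s \in S -> belowK par setT t s)
  (f : conf X -> R) (g : conf X -> R)
  (Hg : forall x : conf X, lower_exp par M S x f (g x))
  (y : conf X) (r : R) :
  lower_exp par M setT y f r <-> lower_exp par M (~: S) y g r.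
Proof.
apply: is_inf_transfer => [_ [P [HP ->]]|_ [Q [HQ ->]] eps heps].
  exists (expect (OmegaK (~: S) y) (marg S y P) g); last exact: expect_marg_le.
  by exists (marg S y P); split => //; apply: irr_ext_marg.
have [P HP le] := composite_expect_le Hdag HM HST Hg HQ heps.
by exists (expect (OmegaK setT y) P f) => //; exists P.
Qed.
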